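(* Let $n$ be one of the integers for which $\mathbb{Z}[\xi_n]$ has class number one, let $\mathcal{M}_n=\mathbb{Z}[\xi_n]$ with $\xi_n=\exp(2\pi i/n)$, and let $I$ be a principal ideal of $\mathcal{M}_n$ of finite index. Consider the Bravais coloring of $\mathcal{M}_n$ determined by $I$, with symmetry group $G=T(G)\rtimes D_N$ and color symmetry group $H$ (notation as in the context). Then $T(G)\le H$ and $\phi_1\in H$.
   Context: Standing assumption: $n\in\{3,4,5,7,8,9,11,12,13,15,16,17,19,20,21,24,25,27,28,32,33,35,36,40,44,45,48,60,84\}$ (the values for which $\mathcal{M}_n=\mathbb{Z}[\xi_n]$, $\xi_n=\exp(2\pi i/n)$, is a principal ideal domain). Let $\varphi$ be Euler's function and $N=n$ if $n$ is even, $N=2n$ if $n$ is odd. Using the $\mathbb{Z}$-basis $\{1,\xi_n,\dots,\xi_n^{\varphi(n)-1}\}$ of $\mathcal{M}_n$, each element is identified with its integer coordinate vector, so $\mathcal{M}_n$ becomes a lattice $\Lambda=\mathbb{Z}^{\varphi(n)}\subset\mathbb{R}^{\varphi(n)}$, and a principal ideal $I$ of index $\ell$ becomes a sublattice $L\subseteq\Lambda$ of index $\ell$. Let $\phi_1$ be the linear map of $\mathbb{R}^{\varphi(n)}$ induced by multiplication by $\exp(2\pi i/N)$ (an $N$-fold rotation, which preserves $\mathcal{M}_n$) and $\phi_2$ the linear map induced by complex conjugation (a reflection); they generate a group $D_N\cong$ dihedral group of order $2N$. Let $T(G)=\{t_y: x\mapsto x+y \mid y\in\Lambda\}$. The symmetry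 group of $\Lambda$ is $G=T(G)\rtimes D_N$. The Bravais coloring determined by $I$ assigns to each element of $\Lambda$ one of $\ell$ colors, two elements getting the same color iff they lie in the same coset of $L$ in $\Lambda$. The color symmetry group $H$ is the set of $g\in G$ that permute the colors, i.e. for every coset $x+L$ the image $g(x+L)$ is again a coset of $L$. The color fixing group $K$ is the set of $g\in H$ with $g(x+L)=x+L$ for every $x\in\Lambda$. *)

From HB Require Import structures.
From mathcomp Require Import all_boot all_order all_algebra.
From mathcomp Require Import reals trigo.
From mathcomp.real_closed Require Import complex.
Set Implicit Arguments. Unset Strict Implicit. Unset Printing Implicit Defensive.
Import Order.TTheory GRing.Theory Num.Theory.
Local Open Scope ring_scope.

Section Defs.
Variable R : realType.

Definition expi (m : nat) : R[i] :=
  Complex (cos (2 * pi / m%:R)) (sin (2 * pi / m%:R)).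

Definition xi (n : nat) : R[i] := expi n.

Definition NN (n : nat) : nat := if odd n then (2 * n)%N else n.

(* M_n = Z[xi_n]: the Z-span of the basis 1, xi_n, ..., xi_n^(phi(n)-1) *)
Definition inM (n : nat) (x : R[i]) : Prop :=
  exists c : 'I_(totient n) -> int, x = \sum_(k < totient n) (c k)%:~R * xi n ^+ k.

Definition inI (n : nat) (a : R[i]) (x : R[i]) : Prop :=
  exists m, inM n m /\ x = a * m.

Definition finite_index (n : nat) (a : R[i]) : Prop :=
  exists s : seq R[i], (forall y, y \in s -> inM n y) /\
    forall x, inM n x -> exists2 y, y \in s & inI n a (x - y).

Definition coset (n : nat) (a : R[i]) (x : R[i]) (w : R[i]) : Prop :=
  exists l, inI n a l /\ w = x + l.

Definition phi1 (n : nat) (x : R[i]) : R[i] := expi (NN n) * x.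
Definition phi2 (x : R[i]) : R[i] := (x^*)%C.

Definition transl (y : R[i]) (x : R[i]) : R[i] := x + y.

Definition inG (n : nat) (g : R[i] -> R[i]) : Prop :=
  exists (k : nat) (b : bool) (y : R[i]), inM n y /\
    forall x, g x = (iter k (phi1 n) (if b then phi2 x else x)) + y.

Definition permutes_colors (n : nat) (a : R[i]) (g : R[i] -> R[i]) : Prop :=
  forall x, inM n x -> exists z, inM n z /\
    forall w, (exists2 v, coset n a x v & w = g v) <-> coset n a z w.

Definition inH (n : nat) (a : R[i]) (g : R[i] -> R[i]) : Prop :=
  inG n g /\ permutes_colors n a g.

End Defs.

Definition PID_values : seq nat :=
  [:: 3; 4; 5; 7; 8; 9; 11; 12; 13; 15; 16; 17; 19; 20; 21; 24; 25; 27; 28;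
      32; 33; 35; 36; 40; 44; 45; 48; 60; 84]%N.

(* The ideal [I = a M_n] is an [M_n]-submodule of [M_n].  A translation by a
   lattice vector shifts every coset [x + I] to the coset [x + y + I].  The
   rotation [phi_1] is multiplication by [exp(2 pi i/N)], which is [xi_n] for
   even [n] and [-xi_n^((n+1)/2)] for odd [n]; in either case it is a unit of
   [M_n] whose inverse is a power of it, so it maps [I] onto [I] and hence
   cosets onto cosets.  That [M_n] is a ring, i.e. closed under products,
   comes from [xi_n] being a root of the monic degree-[phi(n)] cyclotomic
   polynomial.  Neither the class number nor the finiteness of the index
   plays any role; only [n > 0] is used. *)
From HB Require Import structures.
From mathcomp Require Import all_boot all_order all_algebra.
From mathcomp Require Import reals trigo.
From mathcomp Require Import ring lra zify.
From mathcomp Require Import cyclotomic.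
From mathcomp.real_closed Require Import complex.
Import Order.TTheory GRing.Theory Num.Theory.
Local Open Scope ring_scope.

Lemma Cyclotomic_prim_root (F : idomainType) m (z : F) :
  m.-primitive_root z -> (map_poly intr 'Phi_m).[z] = 0.
Proof.
move=> prim_z; have m_gt0 := prim_order_gt0 prim_z.
have prod_Phi_eval k : (0 < k)%N ->
    \prod_(d <- divisors k) (map_poly intr 'Phi_d).[z] = z ^+ k - 1.
  move=> k_gt0; rewrite -horner_prod -rmorph_prod /= prod_Cyclotomic //.
  by rewrite rmorphB /= rmorph1 map_polyXn !hornerE.
have /eqP := prod_Phi_eval m m_gt0; rewrite prim_expr_order // subrr.
rewrite prodf_seq_eq0 => /hasP[d]; rewrite -dvdn_divisors // => d_dvd_m.
move=> /andP[_ /eqP Phi_d_z]; have d_gt0 := dvdn_gt0 m_gt0 d_dvd_m.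
suff -> : m = d by [].
have /eqP := prod_Phi_eval d d_gt0.
have -> : \prod_(e <- divisors d) (map_poly intr 'Phi_e).[z] = 0.
  apply/eqP; rewrite prodf_seq_eq0; apply/hasP; exists d.
    by rewrite -dvdn_divisors.
  by rewrite Phi_d_z eqxx.
rewrite eq_sym subr_eq0 -(prim_order_dvd prim_z) => m_dvd_d.
by apply/eqP; rewrite eqn_dvd m_dvd_d.
Qed.

Section UnitCircle.
Variable R : realType.

Definition ang (t : R) : R[i] := Complex (cos t) (sin t).

Lemma angD s t : ang s * ang t = ang (s + t).
Proof. by rewrite /ang cosD sinD; congr Complex; ring. Qed.

Lemma angX t k : ang t ^+ k = ang (t *+ k).
Proof.
elim: k => [|k IHk]; first by rewrite /ang mulr0n cos0 sin0.
by rewrite exprS IHk angD mulrS.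
Qed.

Lemma ang_neq1 t : 0 < t < pi *+ 2 -> ang t != 1.
Proof.
case/andP=> t_gt0 t_lt2pi; apply/negP => /eqP[cos_t sin_t].
have [t_lt_pi|pi_lt_t|t_pi] := ltgtP t pi.
- by move: (@sin_gt0_pi _ t); rewrite t_gt0 t_lt_pi sin_t ltxx => /(_ isT).
- have : 0 < sin (t - pi).
    by apply: sin_gt0_pi; rewrite subr_gt0 pi_lt_t ltrBlDr -mulr2n.
  by rewrite sinB sin_t sinpi mulr0 mul0r subrr ltxx.
- by move: cos_t; rewrite t_pi cospi; lra.
Qed.

Lemma expiX m k : (0 < m)%N -> expi R m ^+ k = ang (2 * pi * k%:R / m%:R).
Proof.
move=> m_gt0; rewrite /expi -/(ang _) angX; congr ang.
by rewrite -mulr_natr; field; rewrite pnatr_eq0 -lt0n.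
Qed.

Lemma expi_prim_root m : (0 < m)%N -> m.-primitive_root (expi R m).
Proof.
move=> m_gt0; apply/andP; split=> //; apply/forallP => i.
rewrite unity_rootE expiX //; have [->|i1_neq_m] := eqVneq i.+1 m.
  by rewrite mulfK ?pnatr_eq0 -?lt0n // /ang mulr_natl cos2pi sin2pi eqxx.
rewrite eqbF_neg; apply: ang_neq1; have pi_gt0 := pi_gt0 R.
have i1_lt_m : (i.+1 < m)%N by rewrite ltn_neqAle i1_neq_m ltn_ord.
have m_posR : (0 : R) < m%:R by rewrite ltr0n.
have i1_lt_mR : (i.+1%:R : R) < m%:R by rewrite ltr_nat.
rewrite divr_gt0 ?mulr_gt0 ?ltr0n //= ltr_pdivrMr //.
by rewrite -mulr_natr; nra.
Qed.

End UnitCircle.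

Section CyclotomicIntegers.
Variables (R : realType) (n : nat).
Hypothesis n_gt0 : (0 < n)%N.

Local Notation ip := (map_poly (intr : int -> R[i])).

Lemma inM_polyP (x : R[i]) :
  inM n x <-> exists p : {poly int}, x = (ip p).[xi R n].
Proof.
split=> [[c ->]|[p ->]].
  exists (\sum_(k < totient n) (c k)%:P * 'X^k).
  rewrite rmorph_sum horner_sum; apply: eq_bigr => k _.
  by rewrite rmorphM /= map_polyC map_polyXn hornerE /= hornerXn.
have Phi_monic := Cyclotomic_monic n.
rewrite (Pdiv.RingMonic.rdivp_eq Phi_monic p) rmorphD rmorphM /= !hornerE.
rewrite Cyclotomic_prim_root ?expi_prim_root // mulr0 add0r.
set r := Pdiv.Ring.rmodp p 'Phi_n; exists (fun k => r`_k).
rewrite (@horner_coef_wide _ (totient n)); last first.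
  rewrite size_map_inj_poly //; last exact: intr_inj.
  have := Pdiv.Ring.ltn_rmodpN0 p (monic_neq0 Phi_monic).
  by rewrite size_Cyclotomic.
by apply: eq_bigr => k _; rewrite coef_map.
Qed.

Lemma inM0 : inM n (0 : R[i]).
Proof. by apply/inM_polyP; exists 0; rewrite rmorph0 horner0. Qed.

Lemma inMN (x : R[i]) : inM n x -> inM n (- x).
Proof.
by case/inM_polyP=> p ->; apply/inM_polyP; exists (- p); rewrite rmorphN hornerN.
Qed.

Lemma inMD (x y : R[i]) : inM n x -> inM n y -> inM n (x + y).
Proof.
case/inM_polyP=> p -> /inM_polyP[q ->].
by apply/inM_polyP; exists (p + q); rewrite rmorphD hornerD.
Qed.

Lemma inMM (x y : R[i]) : inM n x -> inM n y -> inM n (x * y).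
Proof.
case/inM_polyP=> p -> /inM_polyP[q ->].
by apply/inM_polyP; exists (p * q); rewrite rmorphM hornerM.
Qed.

Lemma inMX (x : R[i]) k : inM n x -> inM n (x ^+ k).
Proof.
move=> Mx; elim: k => [|k IHk]; last by rewrite exprS; apply: inMM.
by apply/inM_polyP; exists 1; rewrite rmorph1 hornerC.
Qed.

Lemma inM_xi : inM n (xi R n).
Proof. by apply/inM_polyP; exists 'X; rewrite map_polyX hornerX. Qed.

(* For odd [n], [exp(2 pi i/2n) = -xi_n^((n+1)/2)] since [exp(pi i) = -1]. *)
Lemma inM_expiNN : inM n (expi R (NN n)).
Proof.
rewrite /NN; case: ifP => [n_odd|_]; last exact: inM_xi.
have n2_gt0 : (0 < 2 * n)%N by rewrite muln_gt0.
have expi_half : expi R (2 * n) ^+ n = -1.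
  rewrite expiX //; have -> : 2 * pi * n%:R / (2 * n)%:R = pi :> R.
    by rewrite natrM; field; rewrite pnatr_eq0 -lt0n.
  by rewrite /ang cospi sinpi; apply/eqP; rewrite eq_complex /= oppr0 !eqxx.
have expi_sq : expi R (2 * n) ^+ 2 = xi R n.
  rewrite expiX // /xi /expi; congr Complex; congr (_ _);
    by rewrite natrM; field; rewrite pnatr_eq0 -lt0n.
have -> : expi R (2 * n) = - xi R n ^+ (n./2).+1.
  have n_succ : (2 * (n./2).+1 = n.+1)%N.
    by rewrite -[in RHS](odd_double_half n) n_odd -muln2; lia.
  by rewrite -expi_sq -exprM n_succ exprS mulrC expi_half mulN1r opprK.
exact/inMN/inMX/inM_xi.
Qed.

End CyclotomicIntegers.

Section ColorSymmetries.
Variables (R : realType) (n : nat) (a : R[i]).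
Hypothesis n_gt0 : (0 < n)%N.

Lemma permutes_colors_transl (y : R[i]) :
  inM n y -> permutes_colors n a (transl y).
Proof.
move=> My x Mx; exists (x + y); split; first exact: inMD.
move=> w; split=> [[_ [l [Il ->]] ->]|[l [Il ->]]].
  by exists l; split; rewrite // /transl addrAC.
by exists (x + l); [exists l | rewrite /transl addrAC].
Qed.

Lemma inI_mull (u x : R[i]) : inM n u -> inI n a x -> inI n a (u * x).
Proof. by move=> Mu [m [Mm ->]]; exists (u * m); split; [exact: inMM | ring]. Qed.

Lemma permutes_colors_mulr (u v : R[i]) : inM n u -> inM n v -> u * v = 1 ->
  permutes_colors n a (fun x => u * x).
Proof.
move=> Mu Mv uv1 x Mx; exists (u * x); split; first exact: inMM.
move=> w; split=> [[_ [l [Il ->]] ->]|[l [Il ->]]].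
  by exists (u * l); split; [exact: inI_mull | rewrite mulrDr].
exists (x + v * l); first by exists (v * l); split; first exact: inI_mull.
by rewrite mulrDr mulrA uv1 mul1r.
Qed.

Lemma inH_transl (y : R[i]) : inM n y -> inH n a (transl y).
Proof.
move=> My; split; last exact: permutes_colors_transl.
by exists 0%N, false, y.
Qed.

Lemma inH_phi1 : inH n a (phi1 n).
Proof.
split.
  exists 1%N, false, 0; split; first exact: inM0.
  by move=> x; rewrite addr0.
have NN_gt0 : (0 < NN n)%N by rewrite /NN; case: odd; rewrite ?muln_gt0.
have M_e : inM n (expi R (NN n)) by apply: inM_expiNN.
apply: (@permutes_colors_mulr _ (expi R (NN n) ^+ (NN n).-1)) => //.
- exact: inMX.
- by rewrite -exprS prednK // (prim_expr_order (@expi_prim_root R _ NN_gt0)).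
Qed.

End ColorSymmetries.

Theorem theorem3p1p1 (R : realType) (n : nat) (a : R[i]) :
  n \in PID_values -> inM n a -> finite_index n a ->
  (forall y : R[i], inM n y -> inH n a (transl y)) /\ inH n a (phi1 n).
Proof.
move=> n_PID _ _; have n_gt0 : (0 < n)%N by case: n n_PID.
by split=> [y My|]; [apply: inH_transl | apply: inH_phi1].
Qed.
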